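(* Let $(\alpha_j)_{j\in\mathbb N}$, $(\beta_j)_{j\in\mathbb N}$, $(\sigma_j)_{j\in\mathbb N}$ be real sequences with $$\alpha_j\ge 0,\qquad 1\ge\beta_1\ge\beta_2\ge\cdots>0,\qquad 1<\sigma_1\le\sigma_2\le\cdots,$$ and let $\mathcal B=\{\mathcal B_d\}_{d\in\mathbb N}$ be the associated sequence of additive random fields with Korobov-kernel marginals (see context). Then: (i) the problem $\mathcal B$ is polynomially tractable both for the absolute error criterion (ABS) and for the normalized error criterion (NOR); (ii) the problem $\mathcal B$ is strongly polynomially tractable for ABS if and only if $$A_*:=\liminf_{d\to\infty}\frac{\ln(1/\beta_d)}{\ln d}>1,$$ and in that case the exponent of strong polynomial tractability (for ABS) is $$p^{\rm str-avg}=\max\Big\{\frac{2}{A_*-1},\frac{2}{\sigma_1-1}\Big\}.$$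
   Context: For $\alpha\ge0$, $\beta>0$, $\sigma>1$, let $B_{\alpha,\beta,\sigma}(x)$, $x\in[0,1]$, be a zero-mean random process with covariance function $\kappa_{\alpha,\beta,\sigma}(x,y)=\alpha+2\beta\sum_{k=1}^\infty k^{-\sigma}\cos(2\pi k(x-y))$. Let $B_j$, $j\in\mathbb N$, be independent zero-mean random processes on $[0,1]$ with covariance functions $\kappa_{\alpha_j,\beta_j,\sigma_j}$, and for $d\in\mathbb N$ let $\mathcal B_d(\mathbf x)=\sum_{j=1}^d B_j(x_j)$, $\mathbf x=(x_1,\dots,x_d)\in[0,1]^d$, a zero-mean random field with covariance $\kappa^{\mathcal B_d}(\mathbf x,\mathbf y)=\sum_{j=1}^d\kappa_{\alpha_j,\beta_j,\sigma_j}(x_j,y_j)$, viewed as a random element of $L_2([0,1]^d)$ with norm $\|\cdot\|_{2,d}$ and inner product $(\cdot,\cdot)_{2,d}$. The $n$th minimal average case error is $e^{\mathcal B_d}(n)=\inf\{(\mathbb E\|\mathcal B_d-\sum_{m=1}^n(\mathcal B_d,\varphi_m)_{2,d}\psi_m\|_{2,d}^2)^{1/2}:\varphi_m,\psi_m\in L_2([0,1]^d)\}$ and $e^{\mathcal B_d}(0)=(\mathbb E\|\mathcal B_d\|_{2,d}^2)^{1/2}$. (Equivalently, if $\lambda_{d,1}\ge\lambda_{d,2}\ge\cdots$ are the eigenvalues of the covariance operator $f\mapsto\int_{[0,1]^d}\kappa^{\mathcal B_d}(\cdot,\mathbf y)f(\mathbf y)\,d\mathbf y$ on $L_2([0,1]^d)$,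 namely the number $\sum_{j=1}^d\alpha_j$ together with the numbers $\beta_j k^{-\sigma_j}$, $k\in\mathbb N$, $j=1,\dots,d$, each taken twice, then $e^{\mathcal B_d}(n)^2=\sum_{j>n}\lambda_{d,j}$.) For $\varepsilon\in(0,1)$ and $Z\in\{\mathrm{ABS},\mathrm{NOR}\}$, the information complexity is $n^{\mathcal B_d,Z}(\varepsilon)=\min\{n\in\mathbb N: e^{\mathcal B_d}(n)\le\varepsilon\,\mathrm{CRI}_d\}$, where $\mathrm{CRI}_d=1$ for ABS and $\mathrm{CRI}_d=e^{\mathcal B_d}(0)$ for NOR. The problem is polynomially tractable (PT) for $Z$ if there are $C,p,q\ge0$ with $n^{\mathcal B_d,Z}(\varepsilon)\le C d^q\varepsilon^{-p}$ for all $d\in\mathbb N$, $\varepsilon\in(0,1)$; strongly polynomially tractable (SPT) if this holds with $q=0$; the exponent of SPT $p^{\rm str-avg}$ is the infimum of all $p$ for which such a bound with $q=0$ holds (for some $C$). Convention: $2/(A_*-1)=0$ if $A_*=\infty$. *)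

From Stdlib Require Import Reals List Arith Bool.
From Coquelicot Require Import Coquelicot.
Open Scope R_scope.

(* Sequences are indexed from 1: alpha 1, alpha 2, ... (value at 0 unused). *)

Definition sum1 (f : nat -> R) (d : nat) : R :=
  fold_right Rplus 0 (map f (List.seq 1 d)).

(* Index set for the eigenvalues of the covariance operator of B_d:
   None           ~ the eigenvalue sum_{j=1}^d alpha_j
   Some (j,k,b)   ~ the eigenvalue beta_j k^{-sigma_j} (copy b in {true,false},
                    i.e. each taken twice), for 1 <= j <= d, k >= 1;
                    other indices carry the value 0 (harmless padding). *)
Definition idx := option (nat * nat * bool).

Definition eigval (alpha beta sigma : nat -> R) (d : nat) (i : idx) : R :=
  match i with
  | None => sum1 alpha d
  | Some (j, k, _) =>
      if (1 <=? j)%nat && (j <=? d)%nat && (1 <=? k)%nat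
      then beta j * Rpower (INR k) (- sigma j) else 0
  end.

(* Trace of the covariance operator = E ||B_d||^2 = e(0)^2 :
   sum_j alpha_j + 2 sum_j beta_j sum_{k>=1} k^{-sigma_j}. *)
Definition trace_cov (alpha beta sigma : nat -> R) (d : nat) : R :=
  sum1 alpha d
  + 2 * sum1 (fun j => beta j * Series (fun k => Rpower (INR (S k)) (- sigma j))) d.

(* Sum of the n largest eigenvalues: sup over at most n distinct indices. *)
Definition top_sum (alpha beta sigma : nat -> R) (d n : nat) : R :=
  real (Lub_Rbar (fun x => exists S : list idx,
          NoDup S /\ (length S <= n)%nat /\
          x = fold_right Rplus 0 (map (eigval alpha beta sigma d) S))).

(* n-th minimal average case error: e(n)^2 = sum_{j>n} lambda_{d,j}. *)
Definition err (alpha beta sigma : nat -> R) (d n : nat) : R :=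
  sqrt (trace_cov alpha beta sigma d - top_sum alpha beta sigma d n).

Inductive crit := ABS | NOR.

Definition CRI (alpha beta sigma : nat -> R) (Z : crit) (d : nat) : R :=
  match Z with ABS => 1 | NOR => err alpha beta sigma d 0 end.

(* n^{B_d,Z}(eps) <= bound  (n^{B_d,Z}(eps) = min{n : e(n) <= eps CRI_d}). *)
Definition info_le (alpha beta sigma : nat -> R) (Z : crit) (d : nat) (eps bound : R) : Prop :=
  exists n : nat, INR n <= bound /\ err alpha beta sigma d n <= eps * CRI alpha beta sigma Z d.

Definition PT (alpha beta sigma : nat -> R) (Z : crit) : Prop :=
  exists C p q : R, 0 <= C /\ 0 <= p /\ 0 <= q /\
    forall (d : nat) (eps : R), (1 <= d)%nat -> 0 < eps < 1 ->
      info_le alpha beta sigma Z d eps (C * Rpower (INR d) q * Rpower eps (- p)).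

Definition SPT_with (alpha beta sigma : nat -> R) (Z : crit) (p : R) : Prop :=
  exists C : R, 0 <= C /\
    forall (d : nat) (eps : R), (1 <= d)%nat -> 0 < eps < 1 ->
      info_le alpha beta sigma Z d eps (C * Rpower eps (- p)).

Definition SPT (alpha beta sigma : nat -> R) (Z : crit) : Prop :=
  exists p : R, 0 <= p /\ SPT_with alpha beta sigma Z p.

Definition is_SPT_exponent (alpha beta sigma : nat -> R) (Z : crit) (pstar : R) : Prop :=
  (forall p, 0 <= p -> SPT_with alpha beta sigma Z p -> pstar <= p) /\
  (forall x, pstar < x -> exists p, 0 <= p /\ SPT_with alpha beta sigma Z p /\ p < x).

Definition A_star (beta : nat -> R) : Rbar :=
  LimInf_seq (fun d => ln (1 / beta d) / ln (INR d)).

(* 2/(A_*-1), with the convention 2/(A_*-1) = 0 if A_* = +oo *)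
Definition two_over (A : Rbar) : R :=
  match A with Finite a => 2 / (a - 1) | _ => 0 end.

(* Upper bounds come from explicit index sets: keep the first eigenvalue and, for each
   coordinate [j <= d], the frequencies [k <= m_j]. Comparing [sum_(k > m) k^(-sigma)] with a
   telescoping sum bounds the discarded part by [2 c beta_j (m_j + 1)^(1 - sigma_1)] with
   [c = sigma_1 / (sigma_1 - 1)]. A cutoff [m_j = m] independent of [j] gives polynomial
   tractability (for NOR, [2 sum_j beta_j] is at most the initial error squared). With
   [tau = p / (p + 2)], the cutoff [m_j ~ (beta_j / t)^tau] costs [eps^(-p) sum_j beta_j^tau],
   so the problem is strongly tractable with exponent [p] once [p >= 2 / (sigma_1 - 1)] and
   [sum_j beta_j^tau < oo], which holds when [A_* > 1 + 2 / p].
   Conversely, [d] eigenvalues [>= beta_d] force [beta_d = O(d^(-1 - 2/p))], i.e.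
   [A_* >= 1 + 2 / p], and the eigenvalues [beta_1 k^(-sigma_1)] of the first coordinate
   force [p >= 2 / (sigma_1 - 1)]. *)

From Stdlib Require Import Reals List Lra Lia ZArith Bool.
From Coquelicot Require Import Coquelicot.
Open Scope R_scope.

Definition sumR (l : list R) : R := fold_right Rplus 0 l.

Lemma sumR_app l1 l2 : sumR (l1 ++ l2) = sumR l1 + sumR l2.
Proof. induction l1 as [|a l IH]; unfold sumR in *; simpl; [ring | rewrite IH; ring]. Qed.

Lemma sumR_map_le {A} (f g : A -> R) l :
  (forall x, In x l -> f x <= g x) -> sumR (map f l) <= sumR (map g l).
Proof.
  induction l as [|a l IH]; intros H; unfold sumR in *; simpl; [lra|].
  apply Rplus_le_compat; [apply H; now left | apply IH; intros; apply H; now right].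
Qed.

Lemma sumR_map_ext {A} (f g : A -> R) l :
  (forall x, In x l -> f x = g x) -> sumR (map f l) = sumR (map g l).
Proof. intros H; f_equal; apply map_ext_in; auto. Qed.

Lemma sumR_map_plus {A} (f g : A -> R) l :
  sumR (map (fun x => f x + g x) l) = sumR (map f l) + sumR (map g l).
Proof. induction l as [|a l IH]; unfold sumR in *; simpl; [ring | rewrite IH; ring]. Qed.

Lemma sumR_map_scal {A} c (f : A -> R) l :
  sumR (map (fun x => c * f x) l) = c * sumR (map f l).
Proof. induction l as [|a l IH]; unfold sumR in *; simpl; [ring | rewrite IH; ring]. Qed.

Lemma sumR_map_const {A} c (l : list A) : sumR (map (fun _ => c) l) = INR (length l) * c.
Proof.
  induction l as [|a l IH]; [unfold sumR; simpl; ring|].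
  cbn [map length]. rewrite S_INR. unfold sumR in *. cbn [fold_right]. rewrite IH; ring.
Qed.

Lemma sumR_map_nonneg {A} (f : A -> R) l :
  (forall x, In x l -> 0 <= f x) -> 0 <= sumR (map f l).
Proof.
  intros H. rewrite <- (Rmult_0_r (INR (length l))), <- sumR_map_const.
  apply sumR_map_le; exact H.
Qed.

Lemma sumR_map_ge_const {A} (f : A -> R) c l :
  (forall x, In x l -> c <= f x) -> INR (length l) * c <= sumR (map f l).
Proof. intros H; rewrite <- sumR_map_const; apply sumR_map_le; auto. Qed.

Lemma sumR_map_flat_map {A B} (g : B -> R) (f : A -> list B) l :
  sumR (map g (flat_map f l)) = sumR (map (fun x => sumR (map g (f x))) l).
Proof.
  induction l as [|a l IH]; simpl; [reflexivity|].
  rewrite map_app, sumR_app, IH. reflexivity.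
Qed.

Lemma INR_length_flat_map {A B} (f : A -> list B) l :
  INR (length (flat_map f l)) = sumR (map (fun x => INR (length (f x))) l).
Proof.
  induction l as [|a l IH]; simpl; [reflexivity|].
  rewrite length_app, plus_INR, IH. reflexivity.
Qed.

Lemma sum_f_R0_sumR a N : sum_f_R0 a N = sumR (map a (seq 0 (S N))).
Proof.
  induction N as [|N IH]; [unfold sumR; simpl; ring|].
  cbn [sum_f_R0]. rewrite IH, (seq_S (S N) 0), map_app, sumR_app.
  unfold sumR at 3; simpl. ring.
Qed.

Section SumOverSublist.
Context {A : Type} (eq_dec : forall x y : A, {x = y} + {x <> y}) (g : A -> R).
Hypothesis g_nonneg : forall x, 0 <= g x.

Lemma sumR_map_remove_le a L : sumR (map g (remove eq_dec a L)) <= sumR (map g L).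
Proof.
  induction L as [|b L IH]; simpl; [lra|].
  destruct (eq_dec a b); simpl; unfold sumR in *; simpl; specialize (g_nonneg b); lra.
Qed.

Lemma sumR_map_remove_In a L :
  In a L -> g a + sumR (map g (remove eq_dec a L)) <= sumR (map g L).
Proof.
  induction L as [|b L IH]; simpl; [tauto|]. intros Hin.
  destruct (eq_dec a b) as [<-|ne].
  - unfold sumR at 2; simpl. fold (sumR (map g L)).
    pose proof (sumR_map_remove_le a L). lra.
  - destruct Hin as [->|Hin]; [congruence|].
    simpl. unfold sumR in *; simpl. specialize (IH Hin). lra.
Qed.

Lemma sumR_map_NoDup_le S L :
  NoDup S -> (forall x, In x S -> g x <> 0 -> In x L) ->
  sumR (map g S) <= sumR (map g L).
Proof.
  intros HS; revert L; induction HS as [|a S Ha HS IH]; intros L HL.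
  - apply sumR_map_nonneg; auto.
  - cbn [map]. unfold sumR at 1; cbn [fold_right]; fold (sumR (map g S)).
    destruct (Req_dec (g a) 0) as [ga0|ga_neq].
    + rewrite ga0, Rplus_0_l. apply IH. intros; apply HL; auto; now right.
    + assert (HaL : In a L) by (apply HL; [now left | exact ga_neq]).
      pose proof (sumR_map_remove_In a L HaL).
      assert (sumR (map g S) <= sumR (map g (remove eq_dec a L))).
      { apply IH. intros x Hx Hgx. apply in_in_remove.
        - intros ->; contradiction.
        - apply HL; auto; now right. }
      lra.
Qed.

End SumOverSublist.

Lemma NoDup_flat_map_disjoint {A B} (f : A -> list B) l :
  NoDup l -> (forall x, In x l -> NoDup (f x)) ->
  (forall x y z, In x l -> In y l -> In z (f x) -> In z (f y) -> x = y) ->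
  NoDup (flat_map f l).
Proof.
  induction l as [|a l IH]; intros Hl Hf Hd; simpl; [constructor|].
  inversion Hl as [|? ? Hal Hl']; subst.
  apply NoDup_app.
  - apply Hf; now left.
  - apply IH; auto.
    + intros; apply Hf; now right.
    + intros x y z Hx Hy; apply Hd; now right.
  - intros z Hz Hz'. apply in_flat_map in Hz' as [x [Hx Hzx]].
    assert (a = x) by (apply (Hd a x z); auto; [now left | now right]).
    subst; contradiction.
Qed.

Lemma exp_le_compat x y : x <= y -> exp x <= exp y.
Proof. intros [H | ->]; [left; apply exp_increasing; auto | lra]. Qed.

Lemma Rpower_pos x y : 0 < Rpower x y.
Proof. apply exp_pos. Qed.

Lemma Rpower_1_l y : Rpower 1 y = 1.
Proof. unfold Rpower. rewrite ln_1, Rmult_0_r, exp_0. reflexivity. Qed.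

Lemma Rpower_2 x : 0 < x -> Rpower x 2 = x ^ 2.
Proof. intros Hx. replace 2 with (INR 2) by (simpl; ring). apply Rpower_pow; auto. Qed.

Lemma Rpower_Rinv_l t y : 0 < t -> Rpower (/ t) y = Rpower t (- y).
Proof. intros Ht. unfold Rpower. rewrite ln_Rinv by auto. f_equal; ring. Qed.

Lemma Rpower_div_base b t y : 0 < b -> 0 < t -> Rpower (b / t) y = Rpower b y * Rpower t (- y).
Proof.
  intros Hb Ht. unfold Rdiv.
  rewrite <- Rpower_mult_distr, Rpower_Rinv_l by (auto; apply Rinv_0_lt_compat; auto).
  reflexivity.
Qed.

Lemma Rpower_opp_le_antimono a b s : 0 < a <= b -> 0 <= s -> Rpower b (- s) <= Rpower a (- s).
Proof.
  intros Hab Hs. rewrite !Rpower_Ropp. apply Rinv_le_contravar.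
  - apply Rpower_pos.
  - apply Rle_Rpower_l; auto.
Qed.

Lemma Rpower_le_base_le_1 r a b : 0 < r <= 1 -> a <= b -> Rpower r b <= Rpower r a.
Proof.
  intros Hr Hab. apply exp_le_compat.
  assert (ln r <= 0) by (rewrite <- ln_1; apply ln_le; lra).
  nra.
Qed.

Lemma Rpower_ge_1 x y : 1 <= x -> 0 <= y -> 1 <= Rpower x y.
Proof. intros Hx Hy. rewrite <- (Rpower_O x) by lra. apply Rle_Rpower; auto. Qed.

Lemma Rpower_opp_ge_1 x y : 0 < x <= 1 -> 0 <= y -> 1 <= Rpower x (- y).
Proof. intros Hx Hy. rewrite <- (Rpower_O x) by lra. apply Rpower_le_base_le_1; lra. Qed.

Definition floor_nat (x : R) : nat := Z.to_nat (Int_part x).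

Lemma floor_nat_spec x : 0 <= x -> INR (floor_nat x) <= x < INR (floor_nat x) + 1.
Proof.
  intros Hx. destruct (base_Int_part x) as [H1 H2].
  assert (Hz : (0 <= Int_part x)%Z).
  { assert (-1 < IZR (Int_part x)) as H by lra. apply lt_IZR in H. lia. }
  unfold floor_nat. rewrite INR_IZR_INZ, Z2Nat.id by exact Hz. lra.
Qed.

Lemma exists_nat_ge X : exists N : nat, X <= INR N.
Proof.
  exists (S (floor_nat (Rabs X))). destruct (floor_nat_spec (Rabs X) (Rabs_pos X)).
  rewrite S_INR. pose proof (Rle_abs X). lra.
Qed.

Lemma ln_INR_pos n : (2 <= n)%nat -> 0 < ln (INR n).
Proof.
  intros Hn. rewrite <- ln_1. apply ln_increasing; [lra|].
  replace 1 with (INR 1) by reflexivity. apply lt_INR; lia.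
Qed.

Lemma INR_ge_1 n : (1 <= n)%nat -> 1 <= INR n.
Proof. intros Hn. replace 1 with (INR 1) by reflexivity. apply le_INR; exact Hn. Qed.

(** * Partial sums of the zeta function *)

(* Mean value bound for [x ^ (1 - s)] on [[x - 1, x]], from [1 + y <= exp y]. *)
Lemma Rpower_telescope_step s x : 1 < s -> 2 <= x ->
  (s - 1) * Rpower x (- s) <= Rpower (x - 1) (1 - s) - Rpower x (1 - s).
Proof.
  intros Hs Hx.
  assert (Hx1 : 0 < 1 - / x) by (assert (/ x <= / 2) by (apply Rinv_le_contravar; lra); lra).
  assert (Heq : x - 1 = x * (1 - / x)) by (field; lra).
  unfold Rpower. rewrite Heq, ln_mult by lra.
  set (L := ln x). set (M := ln (1 - / x)).
  assert (HM : M <= - / x).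
  { pose proof (exp_ineq1_le M) as H. unfold M at 2 in H. rewrite exp_ln in H by auto. lra. }
  assert (E1 : exp ((1 - s) * (L + M)) = exp (- s * L) * x * exp ((1 - s) * M)).
  { replace ((1 - s) * (L + M)) with (- s * L + L + (1 - s) * M) by ring.
    rewrite !exp_plus. unfold L; rewrite exp_ln by lra. ring. }
  assert (E2 : exp ((1 - s) * L) = exp (- s * L) * x).
  { replace ((1 - s) * L) with (- s * L + L) by ring.
    rewrite exp_plus. unfold L; rewrite exp_ln by lra. ring. }
  rewrite E1, E2.
  pose proof (exp_ineq1_le ((1 - s) * M)).
  assert (Hp : 0 < exp (- s * L)) by apply exp_pos.
  assert (Hxm : x * ((1 - s) * M) >= s - 1).
  { assert ((1 - s) * M >= (s - 1) * / x) by nra.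
    assert (x * ((s - 1) * / x) = s - 1) by (field; lra). nra. }
  assert (HF : x * exp ((1 - s) * M) >= x + (s - 1)) by nra.
  set (E := exp (- s * L)) in *. set (F := exp ((1 - s) * M)) in *.
  assert (E * (x * F) >= E * (x + (s - 1))) by (apply Rle_ge, Rmult_le_compat_l; lra).
  nra.
Qed.

Definition zeta_partial (s : R) (N : nat) : R :=
  sumR (map (fun k => Rpower (INR k) (- s)) (seq 1 N)).

Definition zeta (s : R) : R := Series (fun k => Rpower (INR (S k)) (- s)).

Lemma zeta_partial_S s N : zeta_partial s (S N) = zeta_partial s N + Rpower (INR (S N)) (- s).
Proof.
  unfold zeta_partial. rewrite seq_S, map_app, sumR_app. unfold sumR; cbn [map fold_right].
  replace (1 + N)%nat with (S N) by lia. ring.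
Qed.

Lemma zeta_partial_1 s : zeta_partial s 1 = 1.
Proof. unfold zeta_partial, sumR; simpl. rewrite Rpower_1_l. ring. Qed.

Lemma zeta_partial_mono s N M : (N <= M)%nat -> zeta_partial s N <= zeta_partial s M.
Proof.
  induction 1; [lra|]. rewrite zeta_partial_S. pose proof (Rpower_pos (INR (S m)) (- s)). lra.
Qed.

Lemma zeta_partial_diff_le s M N : 1 < s -> (1 <= M)%nat -> (M <= N)%nat ->
  zeta_partial s N - zeta_partial s M
    <= (Rpower (INR M) (1 - s) - Rpower (INR N) (1 - s)) / (s - 1).
Proof.
  intros Hs HM HMN. induction HMN as [|N HMN IH].
  - unfold Rdiv. rewrite !Rminus_diag, Rmult_0_l. lra.
  - rewrite zeta_partial_S.
    assert (H2 : 2 <= INR (S N)).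
    { replace 2 with (INR 2) by (simpl; ring). apply le_INR. lia. }
    pose proof (Rpower_telescope_step s (INR (S N)) Hs H2) as K.
    replace (INR (S N) - 1) with (INR N) in K by (rewrite S_INR; ring).
    apply (Rmult_le_reg_r (s - 1)); [lra|].
    unfold Rdiv in *. rewrite Rmult_assoc, Rinv_l, Rmult_1_r by lra.
    apply (Rmult_le_compat_r (s - 1)) in IH; [|lra].
    rewrite Rmult_assoc, Rinv_l, Rmult_1_r in IH by lra. nra.
Qed.

Lemma zeta_partial_le s N : 1 < s -> zeta_partial s N <= s / (s - 1).
Proof.
  intros Hs. assert (s / (s - 1) = 1 + 1 / (s - 1)) as E by (field; lra).
  assert (0 < 1 / (s - 1)) by (apply Rdiv_lt_0_compat; lra).
  destruct N as [|N].
  - unfold zeta_partial, sumR; simpl. lra.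
  - pose proof (zeta_partial_diff_le s 1 (S N) Hs (le_n 1) ltac:(lia)) as T.
    rewrite zeta_partial_1 in T. simpl INR in T at 1. rewrite Rpower_1_l in T.
    pose proof (Rpower_pos (INR (S N)) (1 - s)).
    assert ((1 - Rpower (INR (S N)) (1 - s)) / (s - 1) <= 1 / (s - 1)).
    { unfold Rdiv; apply Rmult_le_compat_r; [apply Rlt_le, Rinv_0_lt_compat; lra | lra]. }
    lra.
Qed.

Lemma zeta_partial_tail_le s m N : 1 < s ->
  zeta_partial s N - zeta_partial s m <= s / (s - 1) * Rpower (INR (S m)) (1 - s).
Proof.
  intros Hs.
  pose proof (Rpower_pos (INR (S m)) (1 - s)) as Hp.
  assert (E : s / (s - 1) * Rpower (INR (S m)) (1 - s) =
              Rpower (INR (S m)) (1 - s) / (s - 1) + Rpower (INR (S m)) (1 - s))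
    by (field; lra).
  assert (0 <= Rpower (INR (S m)) (1 - s) / (s - 1))
    by (apply Rlt_le, Rdiv_lt_0_compat; lra).
  destruct (le_lt_dec N m) as [HNm | HmN].
  - pose proof (zeta_partial_mono s N m HNm). lra.
  - pose proof (zeta_partial_diff_le s (S m) N Hs ltac:(lia) HmN) as T.
    rewrite zeta_partial_S in T.
    pose proof (Rpower_pos (INR N) (1 - s)).
    assert ((Rpower (INR (S m)) (1 - s) - Rpower (INR N) (1 - s)) / (s - 1)
              <= Rpower (INR (S m)) (1 - s) / (s - 1)).
    { unfold Rdiv; apply Rmult_le_compat_r; [apply Rlt_le, Rinv_0_lt_compat | ]; lra. }
    assert (Rpower (INR (S m)) (- s) <= Rpower (INR (S m)) (1 - s)).
    { apply Rle_Rpower; [apply INR_ge_1; lia | lra]. }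
    lra.
Qed.

Lemma Series_le_of_partial_le (a : nat -> R) M :
  (forall k, 0 <= a k) -> (forall N, sum_f_R0 a N <= M) ->
  (forall N, sum_f_R0 a N <= Series a) /\ Series a <= M.
Proof.
  intros Ha HM.
  assert (Hg : Un_growing (sum_f_R0 a)) by (intro n; simpl; specialize (Ha (S n)); lra).
  assert (Hb : has_ub (sum_f_R0 a)) by (exists M; intros x [i ->]; apply HM).
  destruct (growing_cv _ Hg Hb) as [l Hl].
  replace (Series a) with l by (symmetry; apply is_series_unique, is_series_Reals, Hl).
  split.
  - apply growing_ineq; auto.
  - apply Rle_cv_lim with (Un := sum_f_R0 a) (Vn := fun _ => M); auto.
    intros eps He. exists 0%nat. intros. unfold R_dist. rewrite Rminus_diag, Rabs_R0. auto.
Qed.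

Lemma sum_f_R0_zeta s N :
  sum_f_R0 (fun k => Rpower (INR (S k)) (- s)) N = zeta_partial s (S N).
Proof. rewrite sum_f_R0_sumR. unfold zeta_partial. rewrite <- seq_shift, map_map. reflexivity. Qed.

Section Zeta.
Variable s : R.
Hypothesis s_gt_1 : 1 < s.

Let zeta_terms_nonneg k : 0 <= Rpower (INR (S k)) (- s).
Proof. apply Rlt_le, Rpower_pos. Qed.

Lemma zeta_partial_le_zeta N : zeta_partial s N <= zeta s.
Proof.
  destruct (Series_le_of_partial_le _ (s / (s - 1)) zeta_terms_nonneg) as [H _].
  { intros N'; rewrite sum_f_R0_zeta; apply zeta_partial_le; auto. }
  destruct N as [|N].
  - pose proof (H 0%nat). pose proof (zeta_terms_nonneg 0).
    unfold zeta_partial, sumR, zeta; simpl in *. lra.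
  - rewrite <- sum_f_R0_zeta. apply H.
Qed.

Lemma zeta_ge_1 : 1 <= zeta s.
Proof. rewrite <- (zeta_partial_1 s). apply zeta_partial_le_zeta. Qed.

Lemma zeta_tail_le m : zeta s - zeta_partial s m <= s / (s - 1) * Rpower (INR (S m)) (1 - s).
Proof.
  destruct (Series_le_of_partial_le _
     (zeta_partial s m + s / (s - 1) * Rpower (INR (S m)) (1 - s)) zeta_terms_nonneg) as [_ H].
  { intros N; rewrite sum_f_R0_zeta. pose proof (zeta_partial_tail_le s m (S N) s_gt_1). lra. }
  unfold zeta. lra.
Qed.

End Zeta.

(** * Index sets *)

Definition idx_eq_dec : forall x y : idx, {x = y} + {x <> y}.
Proof. repeat decide equality. Defined.

Definition freq_pair (j k : nat) : list idx := Some (j, k, true) :: Some (j, k, false) :: nil.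

Definition leading_indices (d : nat) (m : nat -> nat) : list idx :=
  None :: flat_map (fun j => flat_map (freq_pair j) (seq 1 (m j))) (seq 1 d).

Lemma leading_indices_NoDup d m : NoDup (leading_indices d m).
Proof.
  unfold leading_indices. constructor.
  - intros H. apply in_flat_map in H as [j [_ H]]. apply in_flat_map in H as [k [_ H]].
    unfold freq_pair in H; simpl in H; intuition discriminate.
  - apply NoDup_flat_map_disjoint.
    + apply seq_NoDup.
    + intros j _. apply NoDup_flat_map_disjoint.
      * apply seq_NoDup.
      * intros k _. unfold freq_pair. constructor; [simpl; intuition discriminate|].
        constructor; [simpl; tauto | constructor].
      * intros k1 k2 z _ _ H1 H2. unfold freq_pair in *; simpl in *.
        intuition (subst; try congruence).
    + intros j1 j2 z _ _ H1 H2.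
      apply in_flat_map in H1 as [k1 [_ H1]]. apply in_flat_map in H2 as [k2 [_ H2]].
      unfold freq_pair in *; simpl in *. intuition (subst; try congruence).
Qed.

Lemma INR_length_leading_indices d m :
  INR (length (leading_indices d m)) = 1 + 2 * sumR (map (fun j => INR (m j)) (seq 1 d)).
Proof.
  unfold leading_indices. cbn [length]. rewrite S_INR, INR_length_flat_map, <- sumR_map_scal.
  rewrite (sumR_map_ext _ (fun j => 2 * INR (m j))); [ring|].
  intros j _. rewrite INR_length_flat_map.
  rewrite (sumR_map_ext _ (fun _ => 2)) by reflexivity.
  rewrite sumR_map_const, length_seq. ring.
Qed.

Definition max_freq (S : list idx) : nat :=
  fold_right (fun i acc => match i with Some (_, k, _) => Nat.max k acc | None => acc end) 0%nat S.

Lemma max_freq_spec S j k b : In (Some (j, k, b)) S -> (k <= max_freq S)%nat.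
Proof.
  induction S as [|a S IH]; simpl; [tauto|].
  intros [E | H].
  - subst a. lia.
  - specialize (IH H). destruct a as [[[? ?] ?]|]; lia.
Qed.

Lemma exists_cutoff A e s : 0 < A -> 0 < e -> 0 < s ->
  exists m : nat, A * Rpower (INR (S m)) (- s) <= e ^ 2 /\
                  INR m <= Rpower A (/ s) * Rpower e (- (2 * / s)).
Proof.
  intros HA He Hs.
  set (Y := Rpower A (/ s) * Rpower e (- (2 * / s))).
  assert (HY : 0 < Y) by (apply Rmult_lt_0_compat; apply Rpower_pos).
  destruct (floor_nat_spec Y (Rlt_le _ _ HY)) as [H1 H2].
  exists (floor_nat Y). split; [|exact H1].
  assert (HYs : Rpower Y s = A * / e ^ 2).
  { unfold Y. rewrite <- Rpower_mult_distr by apply Rpower_pos.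
    rewrite !Rpower_mult. replace (/ s * s) with 1 by (field; lra).
    replace (- (2 * / s) * s) with (Ropp 2) by (field; lra).
    rewrite Rpower_1, Rpower_Ropp, Rpower_2 by auto. reflexivity. }
  assert (HX : Rpower Y s <= Rpower (INR (S (floor_nat Y))) s).
  { apply Rle_Rpower_l; [lra|]. rewrite S_INR. lra. }
  rewrite HYs in HX. rewrite Rpower_Ropp.
  set (X := Rpower (INR (S (floor_nat Y))) s) in *.
  assert (HXp : 0 < X) by apply Rpower_pos.
  assert (He2 : 0 < e ^ 2) by (apply pow_lt; auto).
  apply (Rmult_le_reg_r X); auto.
  replace (A * / X * X) with A by (field; lra).
  apply (Rmult_le_compat_l (e ^ 2)) in HX; [|lra].
  replace (e ^ 2 * (A * / e ^ 2)) with A in HX by (field; lra). lra.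
Qed.

Lemma floor_rpow_tail_le r tau sigma : 0 < r -> 0 < tau < 1 -> 1 <= tau * sigma ->
  r * Rpower (INR (S (floor_nat (Rpower r tau)))) (1 - sigma) <= Rpower r tau.
Proof.
  intros Hr Htau Hts.
  destruct (floor_nat_spec (Rpower r tau) (Rlt_le _ _ (Rpower_pos _ _))) as [_ Hup].
  rewrite <- S_INR in Hup.
  set (X := INR (S (floor_nat (Rpower r tau)))) in *.
  pose proof (Rpower_pos X (1 - sigma)).
  destruct (Rle_or_lt 1 r) as [H1 | H1].
  - assert (1 <= Rpower r tau) by (apply Rpower_ge_1; lra).
    assert (E1 : Rpower X (1 - sigma) <= Rpower r (tau * (1 - sigma))).
    { rewrite <- Rpower_mult. replace (1 - sigma) with (- (sigma - 1)) by ring.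
      apply Rpower_opp_le_antimono; nra. }
    assert (E2 : r * Rpower r (tau * (1 - sigma)) <= Rpower r tau).
    { rewrite <- (Rpower_1 r) at 1 by auto. rewrite <- Rpower_plus.
      apply Rle_Rpower; auto. nra. }
    apply (Rmult_le_compat_l r) in E1; lra.
  - assert (HX1 : 1 <= X)
      by (unfold X; rewrite S_INR; pose proof (pos_INR (floor_nat (Rpower r tau))); lra).
    assert (Rpower X (1 - sigma) <= 1).
    { apply Rle_trans with (Rpower X 0); [apply Rle_Rpower; nra | rewrite Rpower_O; lra]. }
    assert (r <= Rpower r tau).
    { rewrite <- (Rpower_1 r) at 1 by auto. apply Rpower_le_base_le_1; lra. }
    nra.
Qed.

Lemma threshold_exponent_spec p s : 0 < p -> 1 < s -> 2 / (s - 1) <= p ->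
  0 < p / (p + 2) < 1 /\ 1 <= p / (p + 2) * s.
Proof.
  intros Hp Hs Hsp. split; [split|].
  - apply Rdiv_lt_0_compat; lra.
  - apply (Rmult_lt_reg_r (p + 2)); [lra|]. unfold Rdiv; rewrite Rmult_assoc, Rinv_l by lra. lra.
  - apply (Rmult_le_compat_r (s - 1)) in Hsp; [|lra].
    unfold Rdiv in Hsp; rewrite Rmult_assoc, Rinv_l in Hsp by lra.
    apply (Rmult_le_reg_r (p + 2)); [lra|].
    replace (p / (p + 2) * s * (p + 2)) with (p * s) by (field; lra). lra.
Qed.

Lemma exponent_le_of_power_bound K a b : 0 < K ->
  (forall eps, 0 < eps < 1 -> K * Rpower eps a <= Rpower eps b) -> b <= a.
Proof.
  intros HK Hb. destruct (Rle_or_lt b a) as [|Hab]; [assumption | exfalso].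
  set (eps0 := Rmin (K / 2) (1 / 2)).
  assert (Heps0 : 0 < eps0 < 1)
    by (unfold eps0; split; [apply Rmin_glb_lt | pose proof (Rmin_r (K / 2) (1 / 2))]; lra).
  set (eps := Rpower eps0 (/ (b - a))).
  assert (Hinv : 0 < / (b - a)) by (apply Rinv_0_lt_compat; lra).
  assert (Heps : 0 < eps < 1).
  { split; [apply Rpower_pos|]. unfold eps. rewrite <- (Rpower_1_l (/ (b - a))).
    apply Rlt_Rpower_l; lra. }
  assert (Hsmall : Rpower eps (b - a) < K).
  { unfold eps. rewrite Rpower_mult, Rinv_l, Rpower_1 by lra.
    pose proof (Rmin_l (K / 2) (1 / 2)). fold eps0 in H. lra. }
  specialize (Hb eps Heps).
  replace b with ((b - a) + a) in Hb by ring. rewrite Rpower_plus in Hb.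
  pose proof (Rpower_pos eps a). nra.
Qed.

Lemma LimInf_log_ratio_ge (u : nat -> R) l K N : 0 < K ->
  (forall d, (N <= d)%nat -> 0 < u d) ->
  (forall d, (N <= d)%nat -> u d * Rpower (INR d) l <= K) ->
  Rbar_le l (LimInf_seq (fun d => ln (1 / u d) / ln (INR d))).
Proof.
  intros HK Hpos Hdecay.
  assert (Hev : forall e, 0 < e -> Rbar_le (l - e) (LimInf_seq (fun d => ln (1 / u d) / ln (INR d)))).
  { intros e He.
    destruct (exists_nat_ge (exp (Rabs (ln K) / e))) as [N' HN'].
    rewrite <- (LimInf_seq_const (l - e)).
    apply LimInf_le. exists (max 2 (max N N')). intros d Hd.
    pose proof (ln_INR_pos d ltac:(lia)) as Hln.
    assert (HdR : 0 < INR d) by (apply lt_0_INR; lia).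
    assert (Hlnd : Rabs (ln K) / e <= ln (INR d)).
    { rewrite <- (ln_exp (Rabs (ln K) / e)). apply ln_le; [apply exp_pos|].
      pose proof (le_INR N' d ltac:(lia)). lra. }
    assert (Hud : ln (u d) + l * ln (INR d) <= ln K).
    { rewrite <- ln_Rpower, <- ln_mult by (try apply Hpos; try apply Rpower_pos; lia).
      apply ln_le; [|apply Hdecay; lia].
      apply Rmult_lt_0_compat; [apply Hpos; lia | apply Rpower_pos]. }
    assert (ln K <= e * ln (INR d)).
    { pose proof (Rle_abs (ln K)).
      apply (Rmult_le_compat_l e) in Hlnd; [|lra].
      replace (e * (Rabs (ln K) / e)) with (Rabs (ln K)) in Hlnd by (field; lra). lra. }
    apply (Rmult_le_reg_r (ln (INR d))); auto.
    unfold Rdiv.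
    rewrite Rmult_assoc, Rinv_l, Rmult_1_r, Rmult_1_l, ln_Rinv by (try apply Hpos; lia || lra).
    nra. }
  destruct (LimInf_seq _) as [a| |]; simpl in *.
  - destruct (Rle_or_lt l a) as [H | H]; [exact H|].
    specialize (Hev ((l - a) / 2) ltac:(lra)). lra.
  - exact I.
  - exact (Hev 1 ltac:(lra)).
Qed.

Lemma LimInf_gt_eventually (u : nat -> R) (a : R) : Rbar_lt a (LimInf_seq u) ->
  exists a' N, a < a' /\ forall n, (N <= n)%nat -> a' < u n.
Proof.
  intros Ha. destruct (ex_LimInf_seq u) as [l Hl].
  rewrite (is_LimInf_seq_unique u l Hl) in Ha.
  destruct l as [b| |]; simpl in Ha, Hl.
  - assert (Hpos : 0 < (b - a) / 2) by lra.
    destruct (Hl (mkposreal _ Hpos)) as [_ [N HN]].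
    exists ((a + b) / 2), N. split; [lra|]. intros n Hn. specialize (HN n Hn). simpl in HN. lra.
  - destruct (Hl (a + 1)) as [N HN]. exists (a + 1), N. split; [lra | exact HN].
  - contradiction.
Qed.

Lemma Rpower_le_of_log_ratio b j a tau : 0 < b -> (2 <= j)%nat -> 0 <= tau ->
  a < ln (1 / b) / ln (INR j) -> Rpower b tau <= Rpower (INR j) (- (tau * a)).
Proof.
  intros Hb Hj Htau Ha. pose proof (ln_INR_pos j Hj) as Hln.
  apply (Rmult_lt_compat_r (ln (INR j))) in Ha; auto.
  unfold Rdiv in Ha. rewrite Rmult_assoc, Rinv_l, Rmult_1_r, Rmult_1_l, ln_Rinv in Ha by lra.
  apply exp_le_compat. nra.
Qed.

Lemma sumR_pow_le_of_decay (b : nat -> R) tau s N : 0 <= tau -> 1 < s -> (1 <= N)%nat ->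
  (forall j, (1 <= j)%nat -> 0 < b j <= 1) ->
  (forall j, (N <= j)%nat -> Rpower (b j) tau <= Rpower (INR j) (- s)) ->
  forall d, sumR (map (fun j => Rpower (b j) tau) (seq 1 d)) <= Rpower (INR N) s * (s / (s - 1)).
Proof.
  intros Htau Hs HN Hb Hdecay d.
  set (W := Rpower (INR N) s).
  assert (HW : 1 <= W) by (apply Rpower_ge_1; [apply INR_ge_1 | ]; lia || lra).
  apply Rle_trans with (sumR (map (fun j => W * Rpower (INR j) (- s)) (seq 1 d))).
  - apply sumR_map_le. intros j Hj. apply in_seq in Hj.
    pose proof (Rpower_pos (INR j) (- s)).
    destruct (le_lt_dec N j) as [HNj | HjN].
    + pose proof (Hdecay j HNj). nra.
    + assert (Rpower (b j) tau <= 1).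
      { rewrite <- (Rpower_1_l tau). apply Rle_Rpower_l; [lra | apply Hb; lia]. }
      assert (1 <= W * Rpower (INR j) (- s)).
      { unfold W. rewrite Rpower_Ropp.
        assert (Rpower (INR j) s <= Rpower (INR N) s)
          by (apply Rle_Rpower_l; [lra | split; [apply lt_0_INR | apply le_INR]; lia]).
        pose proof (Rpower_pos (INR j) s).
        apply (Rmult_le_reg_r (Rpower (INR j) s)); auto.
        rewrite Rmult_assoc, Rinv_l by lra. lra. }
      lra.
  - rewrite sumR_map_scal. apply Rmult_le_compat_l; [lra | apply zeta_partial_le; auto].
Qed.

Lemma two_over_le_of_Rbar_le p A : 0 < p -> Rbar_le (1 + 2 / p) A -> two_over A <= p.
Proof.
  intros Hp HA. destruct A as [a| |]; simpl in *; [|lra | contradiction].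
  assert (0 < 2 / p) by (apply Rdiv_lt_0_compat; lra).
  apply (Rmult_le_reg_r (a - 1)); [lra|]. unfold Rdiv. rewrite Rmult_assoc, Rinv_l by lra.
  assert (p * (1 + 2 / p) = p + 2) by (field; lra). nra.
Qed.

Lemma Rbar_lt_of_two_over_lt p A : Rbar_lt 1 A -> two_over A < p -> Rbar_lt (1 + 2 / p) A.
Proof.
  intros HA Hp. destruct A as [a| |]; simpl in *; [|exact I | contradiction].
  assert (0 < 2 / (a - 1)) by (apply Rdiv_lt_0_compat; lra).
  assert (Hp0 : 0 < p) by lra.
  apply (Rmult_lt_compat_r (a - 1)) in Hp; [|lra].
  unfold Rdiv in Hp; rewrite Rmult_assoc, Rinv_l in Hp by lra.
  assert (2 / p < a - 1); [|lra].
  apply (Rmult_lt_reg_r p); [lra|]. unfold Rdiv; rewrite Rmult_assoc, Rinv_l by lra. lra.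
Qed.

(** * The additive random field *)

Section AdditiveKorobov.
Variables alpha beta sigma : nat -> R.
Hypothesis alpha_nonneg : forall j, (1 <= j)%nat -> 0 <= alpha j.
Hypothesis beta_1_le_1 : beta 1%nat <= 1.
Hypothesis beta_antimono_S : forall j, (1 <= j)%nat -> beta (S j) <= beta j.
Hypothesis beta_pos : forall j, (1 <= j)%nat -> 0 < beta j.
Hypothesis sigma_1_gt_1 : 1 < sigma 1%nat.
Hypothesis sigma_mono_S : forall j, (1 <= j)%nat -> sigma j <= sigma (S j).

Local Notation ev d := (eigval alpha beta sigma d).
Local Notation tr d := (trace_cov alpha beta sigma d).
Local Notation top d n := (top_sum alpha beta sigma d n).
Local Notation resid d n := (tr d - top d n).

Lemma sigma_1_le j : (1 <= j)%nat -> sigma 1%nat <= sigma j.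
Proof. induction 1; [lra|]. pose proof (sigma_mono_S m ltac:(lia)). lra. Qed.

Lemma sigma_gt_1 j : (1 <= j)%nat -> 1 < sigma j.
Proof. intros H; pose proof (sigma_1_le j H); lra. Qed.

Lemma beta_antimono j d : (1 <= j)%nat -> (j <= d)%nat -> beta d <= beta j.
Proof. intros H1; induction 1; [lra|]. pose proof (beta_antimono_S m ltac:(lia)). lra. Qed.

Lemma beta_le_1 j : (1 <= j)%nat -> beta j <= 1.
Proof. intros H; pose proof (beta_antimono 1 j (le_n 1) H); lra. Qed.

Lemma sum1_alpha_nonneg d : 0 <= sum1 alpha d.
Proof. apply sumR_map_nonneg. intros j Hj. apply in_seq in Hj. apply alpha_nonneg; lia. Qed.

Lemma eigval_nonneg d i : 0 <= ev d i.
Proof.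
  destruct i as [[[j k] b]|]; unfold eigval; [|apply sum1_alpha_nonneg].
  destruct ((1 <=? j)%nat && (j <=? d)%nat && (1 <=? k)%nat) eqn:E; [|lra].
  apply andb_true_iff in E as [[E1%Nat.leb_le _]%andb_true_iff _].
  apply Rlt_le, Rmult_lt_0_compat; [apply beta_pos; lia | apply Rpower_pos].
Qed.

Lemma eigval_Some d j k b : (1 <= j)%nat -> (j <= d)%nat -> (1 <= k)%nat ->
  ev d (Some (j, k, b)) = beta j * Rpower (INR k) (- sigma j).
Proof.
  intros H1 H2 H3. unfold eigval.
  replace (1 <=? j)%nat with true by (symmetry; apply Nat.leb_le; lia).
  replace (j <=? d)%nat with true by (symmetry; apply Nat.leb_le; lia).
  replace (1 <=? k)%nat with true by (symmetry; apply Nat.leb_le; lia).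
  reflexivity.
Qed.

Lemma sum_eigval_leading d m : sumR (map (ev d) (leading_indices d m)) =
  sum1 alpha d + sumR (map (fun j => 2 * beta j * zeta_partial (sigma j) (m j)) (seq 1 d)).
Proof.
  unfold leading_indices. cbn [map]. unfold sumR at 1. cbn [fold_right]. fold sumR.
  f_equal. rewrite sumR_map_flat_map. apply sumR_map_ext. intros j Hj. apply in_seq in Hj.
  rewrite sumR_map_flat_map. unfold zeta_partial. rewrite <- sumR_map_scal. apply sumR_map_ext.
  intros k Hk. apply in_seq in Hk. unfold freq_pair, sumR; cbn [map fold_right].
  rewrite !eigval_Some by lia. ring.
Qed.

Lemma trace_cov_zeta d :
  tr d = sum1 alpha d + sumR (map (fun j => 2 * beta j * zeta (sigma j)) (seq 1 d)).
Proof.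
  unfold trace_cov, sum1. fold sumR. f_equal.
  rewrite <- sumR_map_scal. apply sumR_map_ext. intros; unfold zeta; ring.
Qed.

(* Every index of positive eigenvalue in [S] is among the leading indices with
   cutoff [max_freq S], whose eigenvalues sum to at most the trace. *)
Lemma sum_eigval_le_trace d S : NoDup S -> sumR (map (ev d) S) <= tr d.
Proof.
  intros HS.
  apply Rle_trans with (sumR (map (ev d) (leading_indices d (fun _ => max_freq S)))).
  - apply (sumR_map_NoDup_le idx_eq_dec); [apply eigval_nonneg | exact HS |].
    intros [[[j k] b]|] Hx Hnz; [|left; reflexivity].
    unfold eigval in Hnz.
    destruct ((1 <=? j)%nat && (j <=? d)%nat && (1 <=? k)%nat) eqn:E; [|lra].
    apply andb_true_iff in E as [[E1%Nat.leb_le E2%Nat.leb_le]%andb_true_iff E3%Nat.leb_le].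
    right. apply in_flat_map. exists j. split; [apply in_seq; lia|].
    apply in_flat_map. exists k. split.
    + apply in_seq. pose proof (max_freq_spec S j k b Hx). lia.
    + unfold freq_pair; destruct b; simpl; auto.
  - rewrite sum_eigval_leading, trace_cov_zeta. apply Rplus_le_compat_l, sumR_map_le.
    intros j Hj. apply in_seq in Hj.
    pose proof (zeta_partial_le_zeta (sigma j) (sigma_gt_1 j ltac:(lia)) (max_freq S)).
    pose proof (beta_pos j ltac:(lia)). nra.
Qed.

Lemma top_sum_spec d n :
  (forall S, NoDup S -> (length S <= n)%nat -> sumR (map (ev d) S) <= top d n) /\
  (forall B, (forall S, NoDup S -> (length S <= n)%nat -> sumR (map (ev d) S) <= B) ->
     top d n <= B).
Proof.
  unfold top_sum.
  set (E := fun x => exists S : list idx, NoDup S /\ (length S <= n)%nat /\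
                      x = fold_right Rplus 0 (map (ev d) S)).
  generalize (Lub_Rbar_correct E). destruct (Lub_Rbar E) as [r| |]; intros [Hub Hlub].
  - split.
    + intros S HS Hl. apply (Hub (sumR (map (ev d) S))). exists S; auto.
    + intros B HB. apply (Hlub (Finite B)). intros x [S [HS [Hl ->]]]. apply HB; auto.
  - exfalso. apply (Hlub (Finite (tr d))). intros x [S [HS [Hl ->]]].
    apply sum_eigval_le_trace; auto.
  - exfalso. apply (Hub 0). exists nil. repeat split; [constructor | simpl; lia].
Qed.

Lemma sum_eigval_le_top d n S : NoDup S -> (length S <= n)%nat -> sumR (map (ev d) S) <= top d n.
Proof. apply top_sum_spec. Qed.

Lemma top_sum_le_trace d n : top d n <= tr d.
Proof. apply (proj2 (top_sum_spec d n)). intros; apply sum_eigval_le_trace; auto. Qed.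

Lemma top_sum_nonneg d n : 0 <= top d n.
Proof. apply (sum_eigval_le_top d n nil); [constructor | simpl; lia]. Qed.

Lemma top_sum_0 d : top d 0 = 0.
Proof.
  apply Rle_antisym; [|apply top_sum_nonneg].
  apply (proj2 (top_sum_spec d 0)). intros [|i S] _ Hl; [unfold sumR; simpl; lra | simpl in Hl; lia].
Qed.

Lemma err_le_of_resid d n e : 0 <= e -> resid d n <= e ^ 2 -> err alpha beta sigma d n <= e.
Proof. intros He H. unfold err. rewrite <- (sqrt_pow2 e) by auto. apply sqrt_le_1_alt, H. Qed.

Lemma resid_le_of_err d n e : err alpha beta sigma d n <= e -> resid d n <= e ^ 2.
Proof.
  intros H. unfold err in H. pose proof (top_sum_le_trace d n).
  pose proof (sqrt_sqrt (resid d n) ltac:(lra)). pose proof (sqrt_pos (resid d n)). nra.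
Qed.

(* At most [n] of the indices in [L] can be kept, so at least [length L - n] of them are discarded. *)
Lemma resid_ge_count d n L v : NoDup L -> 0 <= v -> (forall x, In x L -> v <= ev d x) ->
  (INR (length L) - INR n) * v <= resid d n.
Proof.
  intros HL Hv HLv.
  assert (top d n <= tr d - (INR (length L) - INR n) * v); [|lra].
  apply (proj2 (top_sum_spec d n)). intros S HS Hl.
  set (inS := fun x => if in_dec idx_eq_dec x S then true else false).
  set (U := filter (fun x => negb (inS x)) L).
  assert (HSU : NoDup (S ++ U)).
  { apply NoDup_app; auto; [apply NoDup_filter; auto|].
    intros a Ha HaU. apply filter_In in HaU as [_ Hf]. unfold inS in Hf.
    destruct (in_dec idx_eq_dec a S); simpl in Hf; congruence. }
  pose proof (sum_eigval_le_trace d _ HSU) as Ht. rewrite map_app, sumR_app in Ht.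
  assert (HU : INR (length U) * v <= sumR (map (ev d) U)).
  { apply sumR_map_ge_const. intros x Hx. apply filter_In in Hx as [Hx _]; auto. }
  assert (Hlen : (length L <= length U + length S)%nat).
  { pose proof (filter_length inS L).
    assert (length (filter inS L) <= length S)%nat.
    { apply NoDup_incl_length; [apply NoDup_filter; auto|]. intros x Hx.
      apply filter_In in Hx as [_ Hf]. unfold inS in Hf.
      destruct (in_dec idx_eq_dec x S); [auto | discriminate]. }
    unfold U. lia. }
  apply le_INR in Hlen, Hl. rewrite plus_INR in Hlen.
  assert ((INR (length L) - INR n) * v <= INR (length U) * v) by (apply Rmult_le_compat_r; lra).
  lra.
Qed.

Definition tail_const : R := sigma 1%nat / (sigma 1%nat - 1).

Lemma tail_const_pos : 0 < tail_const.
Proof. apply Rdiv_lt_0_compat; lra. Qed.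

Lemma zeta_tail_le_uniform j m : (1 <= j)%nat ->
  zeta (sigma j) - zeta_partial (sigma j) m <= tail_const * Rpower (INR (S m)) (1 - sigma 1%nat).
Proof.
  intros Hj. pose proof (sigma_1_le j Hj). pose proof (sigma_gt_1 j Hj).
  pose proof (zeta_tail_le (sigma j) ltac:(lra) m).
  assert (sigma j / (sigma j - 1) <= tail_const).
  { unfold tail_const.
    replace (sigma j / (sigma j - 1)) with (1 + / (sigma j - 1)) by (field; lra).
    replace (sigma 1%nat / (sigma 1%nat - 1)) with (1 + / (sigma 1%nat - 1)) by (field; lra).
    apply Rplus_le_compat_l, Rinv_le_contravar; lra. }
  assert (Rpower (INR (S m)) (1 - sigma j) <= Rpower (INR (S m)) (1 - sigma 1%nat))
    by (apply Rle_Rpower; [apply INR_ge_1; lia | lra]).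
  pose proof (Rpower_pos (INR (S m)) (1 - sigma j)).
  assert (0 < sigma j / (sigma j - 1)) by (apply Rdiv_lt_0_compat; lra).
  assert (sigma j / (sigma j - 1) * Rpower (INR (S m)) (1 - sigma j) <=
          tail_const * Rpower (INR (S m)) (1 - sigma 1%nat)) by (apply Rmult_le_compat; lra).
  lra.
Qed.

Lemma resid_leading_le d m :
  resid d (length (leading_indices d m)) <=
  sumR (map (fun j => 2 * tail_const * beta j * Rpower (INR (S (m j))) (1 - sigma 1%nat)) (seq 1 d)).
Proof.
  pose proof (sum_eigval_le_top d _ _ (leading_indices_NoDup d m) (le_n _)) as Ht.
  rewrite sum_eigval_leading in Ht. rewrite trace_cov_zeta.
  enough (sumR (map (fun j => 2 * beta j * zeta (sigma j)) (seq 1 d)) <=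
          sumR (map (fun j => 2 * beta j * zeta_partial (sigma j) (m j)) (seq 1 d)) +
          sumR (map (fun j => 2 * tail_const * beta j * Rpower (INR (S (m j))) (1 - sigma 1%nat))
                    (seq 1 d))) by lra.
  rewrite <- sumR_map_plus. apply sumR_map_le. intros j Hj. apply in_seq in Hj.
  pose proof (zeta_tail_le_uniform j (m j) ltac:(lia)). pose proof (beta_pos j ltac:(lia)). nra.
Qed.


Lemma sum_beta_le d : sumR (map beta (seq 1 d)) <= INR d.
Proof.
  replace (INR d) with (INR (length (seq 1 d)) * 1) by (rewrite length_seq; ring).
  rewrite <- sumR_map_const. apply sumR_map_le. intros j Hj. apply in_seq in Hj. apply beta_le_1; lia.
Qed.

Lemma sum_beta_le_trace d : 2 * sumR (map beta (seq 1 d)) <= tr d.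
Proof.
  rewrite trace_cov_zeta, <- sumR_map_scal. pose proof (sum1_alpha_nonneg d).
  enough (sumR (map (fun j => 2 * beta j) (seq 1 d)) <=
          sumR (map (fun j => 2 * beta j * zeta (sigma j)) (seq 1 d))) by lra.
  apply sumR_map_le. intros j Hj. apply in_seq in Hj.
  pose proof (zeta_ge_1 (sigma j) (sigma_gt_1 j ltac:(lia))). pose proof (beta_pos j ltac:(lia)). nra.
Qed.

Lemma INR_length_leading_uniform d m :
  INR (length (leading_indices d (fun _ => m))) = 1 + 2 * INR d * INR m.
Proof. rewrite INR_length_leading_indices, sumR_map_const, length_seq. ring. Qed.

Lemma resid_leading_uniform_le d m :
  resid d (length (leading_indices d (fun _ => m))) <=
  2 * tail_const * Rpower (INR (S m)) (1 - sigma 1%nat) * sumR (map beta (seq 1 d)).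
Proof.
  eapply Rle_trans; [apply resid_leading_le|].
  rewrite <- sumR_map_scal. apply Req_le, sumR_map_ext. intros; ring.
Qed.

Lemma PT_ABS : PT alpha beta sigma ABS.
Proof.
  set (s := sigma 1%nat - 1). assert (Hs : 0 < s) by (unfold s; lra).
  set (K := Rpower (2 * tail_const) (/ s)). assert (HK : 0 < K) by apply Rpower_pos.
  assert (Hp : 0 < 2 * / s) by (apply Rmult_lt_0_compat; [lra | apply Rinv_0_lt_compat, Hs]).
  exists (1 + 2 * K), (2 * / s), (1 + / s). split; [lra|]. split; [lra|].
  split; [pose proof (Rinv_0_lt_compat s Hs); lra|].
  intros d eps Hd Heps. pose proof (INR_ge_1 d Hd) as HdR. pose proof tail_const_pos.
  destruct (exists_cutoff (2 * tail_const * INR d) eps s ltac:(nra) ltac:(lra) Hs) as [m [Hres Hm]].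
  exists (length (leading_indices d (fun _ => m))). split.
  - rewrite INR_length_leading_uniform.
    rewrite <- Rpower_mult_distr in Hm by lra. fold K in Hm.
    rewrite Rpower_plus, Rpower_1 by lra.
    pose proof (Rinv_0_lt_compat s Hs).
    assert (1 <= Rpower (INR d) (/ s)) by (apply Rpower_ge_1; lra).
    assert (1 <= Rpower eps (- (2 * / s))) by (apply Rpower_opp_ge_1; lra).
    assert (1 <= INR d * Rpower (INR d) (/ s)) by nra.
    assert (1 <= INR d * Rpower (INR d) (/ s) * Rpower eps (- (2 * / s))) by nra.
    assert (INR d * INR m <= INR d * (K * Rpower (INR d) (/ s) * Rpower eps (- (2 * / s))))
      by (apply Rmult_le_compat_l; lra).
    nra.
  - simpl CRI. apply err_le_of_resid; [lra|].
    eapply Rle_trans; [apply resid_leading_uniform_le|].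
    replace (1 - sigma 1%nat) with (- s) by (unfold s; ring).
    pose proof (sum_beta_le d). pose proof (Rpower_pos (INR (S m)) (- s)).
    assert (0 < tail_const * Rpower (INR (S m)) (- s)) by (apply Rmult_lt_0_compat; lra).
    nra.
Qed.

Lemma PT_NOR : PT alpha beta sigma NOR.
Proof.
  set (s := sigma 1%nat - 1). assert (Hs : 0 < s) by (unfold s; lra).
  set (K := Rpower tail_const (/ s)). assert (HK : 0 < K) by apply Rpower_pos.
  assert (Hp : 0 < 2 * / s) by (apply Rmult_lt_0_compat; [lra | apply Rinv_0_lt_compat, Hs]).
  exists (1 + 2 * K), (2 * / s), 1. split; [lra|]. split; [lra|]. split; [lra|].
  intros d eps Hd Heps. pose proof (INR_ge_1 d Hd) as HdR. pose proof tail_const_pos.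
  destruct (exists_cutoff tail_const eps s tail_const_pos ltac:(lra) Hs) as [m [Hres Hm]].
  exists (length (leading_indices d (fun _ => m))). split.
  - rewrite INR_length_leading_uniform, Rpower_1 by lra. fold K in Hm.
    assert (1 <= Rpower eps (- (2 * / s))) by (apply Rpower_opp_ge_1; lra).
    assert (INR d * INR m <= INR d * (K * Rpower eps (- (2 * / s))))
      by (apply Rmult_le_compat_l; lra).
    nra.
  - simpl CRI. unfold err at 2. rewrite top_sum_0, Rminus_0_r.
    pose proof (top_sum_le_trace d 0). pose proof (top_sum_nonneg d 0).
    assert (Htr : 0 <= tr d) by lra.
    apply err_le_of_resid; [apply Rmult_le_pos; [lra | apply sqrt_pos]|].
    rewrite Rpow_mult_distr, pow2_sqrt by exact Htr.
    eapply Rle_trans; [apply resid_leading_uniform_le|].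
    replace (1 - sigma 1%nat) with (- s) by (unfold s; ring).
    pose proof (sum_beta_le_trace d). pose proof (Rpower_pos (INR (S m)) (- s)).
    pose proof (sumR_map_nonneg beta (seq 1 d)
                  ltac:(intros j Hj; apply in_seq in Hj; apply Rlt_le, beta_pos; lia)).
    nra.
Qed.

Definition threshold_cutoff (tau t : R) (j : nat) : nat := floor_nat (Rpower (beta j / t) tau).

Lemma INR_length_threshold_le tau t d : 0 < t ->
  INR (length (leading_indices d (threshold_cutoff tau t)))
    <= 1 + 2 * Rpower t (- tau) * sumR (map (fun j => Rpower (beta j) tau) (seq 1 d)).
Proof.
  intros Ht. rewrite INR_length_leading_indices, (Rmult_assoc 2), <- (sumR_map_scal (Rpower t (- tau))).
  enough (sumR (map (fun j => INR (threshold_cutoff tau t j)) (seq 1 d)) <=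
          sumR (map (fun j => Rpower t (- tau) * Rpower (beta j) tau) (seq 1 d))) by lra.
  apply sumR_map_le. intros j Hj. apply in_seq in Hj. unfold threshold_cutoff.
  destruct (floor_nat_spec (Rpower (beta j / t) tau) (Rlt_le _ _ (Rpower_pos _ _))) as [H _].
  pose proof (Rpower_div_base (beta j) t tau ltac:(apply beta_pos; lia) Ht). lra.
Qed.

Lemma resid_threshold_le tau t d : 0 < t -> 0 < tau < 1 -> 1 <= tau * sigma 1%nat ->
  resid d (length (leading_indices d (threshold_cutoff tau t)))
    <= 2 * tail_const * Rpower t (1 - tau) * sumR (map (fun j => Rpower (beta j) tau) (seq 1 d)).
Proof.
  intros Ht Htau Hts. eapply Rle_trans; [apply resid_leading_le|].
  rewrite <- sumR_map_scal. apply sumR_map_le. intros j Hj. apply in_seq in Hj.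
  pose proof (beta_pos j ltac:(lia)) as Hb. pose proof tail_const_pos.
  pose proof (floor_rpow_tail_le (beta j / t) tau (sigma 1%nat)
                ltac:(apply Rdiv_lt_0_compat; auto) Htau Hts) as Htail.
  fold (threshold_cutoff tau t j) in Htail.
  rewrite Rpower_div_base in Htail by auto.
  assert (Et : Rpower t (1 - tau) = t * Rpower t (- tau))
    by (unfold Rminus; rewrite Rpower_plus, Rpower_1; auto).
  rewrite Et. replace (beta j) with (t * (beta j / t)) at 1 by (field; lra).
  apply (Rmult_le_compat_l (2 * tail_const * t)) in Htail; [lra | nra].
Qed.

Lemma SPT_with_of_sum_beta_pow_le p B : 0 < p -> 2 / (sigma 1%nat - 1) <= p -> 0 < B ->
  (forall d, sumR (map (fun j => Rpower (beta j) (p / (p + 2))) (seq 1 d)) <= B) ->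
  SPT_with alpha beta sigma ABS p.
Proof.
  intros Hp Hsp HB HsumB.
  destruct (threshold_exponent_spec p (sigma 1%nat) Hp sigma_1_gt_1 Hsp) as [Htau Hts].
  set (tau := p / (p + 2)) in *.
  pose proof tail_const_pos. set (c := 2 * tail_const * B).
  assert (Hc : 0 < c) by (unfold c; nra).
  exists (1 + 2 * B * Rpower c (p / 2)). split; [pose proof (Rpower_pos c (p / 2)); nra|].
  intros d eps Hd Heps.
  set (Q := eps ^ 2 / c). assert (HQ : 0 < Q) by (apply Rdiv_lt_0_compat; [apply pow_lt|]; lra).
  (* the cutoff scale [t] balances [2 tail_const t^(1 - tau) B = eps^2] *)
  set (t := Rpower Q ((p + 2) / 2)). assert (Ht : 0 < t) by apply Rpower_pos.
  assert (Ht1 : Rpower t (1 - tau) = Q).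
  { unfold t. rewrite Rpower_mult. replace ((p + 2) / 2 * (1 - tau)) with 1 by (unfold tau; field; lra).
    apply Rpower_1; auto. }
  assert (Httau : Rpower t (- tau) = Rpower eps (- p) * Rpower c (p / 2)).
  { unfold t, Q.
    rewrite Rpower_mult, Rpower_div_base, <- Rpower_2, Rpower_mult by (try apply pow_lt; lra).
    f_equal; f_equal; unfold tau; field; lra. }
  specialize (HsumB d).
  set (SB := sumR (map (fun j => Rpower (beta j) tau) (seq 1 d))) in *.
  assert (HSB : 0 <= SB) by (apply sumR_map_nonneg; intros; apply Rlt_le, Rpower_pos).
  exists (length (leading_indices d (threshold_cutoff tau t))). split.
  - eapply Rle_trans; [apply INR_length_threshold_le; exact Ht|]. fold SB. rewrite Httau.
    pose proof (Rpower_opp_ge_1 eps p ltac:(lra) ltac:(lra)).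
    pose proof (Rpower_pos c (p / 2)). pose proof (Rpower_pos eps (- p)).
    assert (Rpower eps (- p) * Rpower c (p / 2) * SB <= Rpower eps (- p) * Rpower c (p / 2) * B)
      by (apply Rmult_le_compat_l; nra).
    lra.
  - simpl CRI. apply err_le_of_resid; [lra|].
    eapply Rle_trans; [apply resid_threshold_le; auto|]. fold SB. rewrite Ht1.
    replace ((eps * 1) ^ 2) with (2 * tail_const * Q * B) by (unfold Q, c; field; lra).
    apply Rmult_le_compat_l; [nra | exact HsumB].
Qed.

Lemma resid_ge_beta_d d n : (1 <= d)%nat -> (INR d - INR n) * beta d <= resid d n.
Proof.
  intros Hd.
  set (L := map (fun j => Some (j, 1%nat, true)) (seq 1 d)).
  replace (INR d) with (INR (length L)) by (unfold L; rewrite length_map, length_seq; reflexivity).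
  apply resid_ge_count.
  - apply NoDup_map_NoDup_ForallPairs; [|apply seq_NoDup]. intros x y _ _ E; injection E; auto.
  - apply Rlt_le, beta_pos; auto.
  - intros x Hx. apply in_map_iff in Hx as [j [<- Hj]]. apply in_seq in Hj.
    rewrite eigval_Some by lia. simpl INR. rewrite Rpower_1_l, Rmult_1_r. apply beta_antimono; lia.
Qed.

(* Of the eigenvalues [beta_1 k^(-sigma_1)], [k <= 2 n + 1], at least [n + 1] are discarded. *)
Lemma resid_dim1_ge n :
  beta 1%nat * Rpower 2 (- sigma 1%nat) * Rpower (INR n + 1) (1 - sigma 1%nat) <= resid 1%nat n.
Proof.
  set (L := map (fun k => Some (1%nat, k, true)) (seq 1 (2 * n + 1))).
  set (v := beta 1%nat * Rpower (INR (2 * n + 1)) (- sigma 1%nat)).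
  pose proof (beta_pos 1 (le_n 1)) as Hb1.
  assert (HL : (INR (length L) - INR n) * v <= resid 1%nat n).
  { apply resid_ge_count.
    - apply NoDup_map_NoDup_ForallPairs; [|apply seq_NoDup]. intros x y _ _ E; injection E; auto.
    - apply Rlt_le, Rmult_lt_0_compat; [auto | apply Rpower_pos].
    - intros x Hx. apply in_map_iff in Hx as [k [<- Hk]]. apply in_seq in Hk.
      rewrite eigval_Some by lia. apply Rmult_le_compat_l; [lra|].
      apply Rpower_opp_le_antimono; [split; [apply lt_0_INR | apply le_INR]; lia | lra]. }
  replace (INR (length L) - INR n) with (INR n + 1) in HL
    by (unfold L; rewrite length_map, length_seq, plus_INR, mult_INR; simpl; ring).
  set (N1 := INR n + 1) in *. assert (HN1 : 1 <= N1) by (pose proof (pos_INR n); unfold N1; lra).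
  assert (Hsplit : Rpower 2 (- sigma 1%nat) * Rpower N1 (- sigma 1%nat)
                     <= Rpower (INR (2 * n + 1)) (- sigma 1%nat)).
  { rewrite Rpower_mult_distr by lra. apply Rpower_opp_le_antimono; [|lra].
    split; [apply lt_0_INR; lia|]. unfold N1; rewrite plus_INR, mult_INR; simpl; lra. }
  assert (Hexp : Rpower N1 (1 - sigma 1%nat) = N1 * Rpower N1 (- sigma 1%nat)).
  { rewrite <- (Rpower_1 N1) at 2 by lra. rewrite <- Rpower_plus. f_equal; ring. }
  rewrite Hexp. unfold v in HL.
  pose proof (Rpower_pos 2 (- sigma 1%nat)). pose proof (Rpower_pos N1 (- sigma 1%nat)).
  apply (Rmult_le_compat_l (N1 * beta 1%nat)) in Hsplit; nra.
Qed.

Lemma SPT_with_exponent_ge_sigma p : 0 <= p -> SPT_with alpha beta sigma ABS p ->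
  2 / (sigma 1%nat - 1) <= p.
Proof.
  intros Hp [C [HC Hb]].
  set (s := sigma 1%nat - 1). assert (Hs : 0 < s) by (unfold s; lra).
  pose proof (beta_pos 1 (le_n 1)) as Hb1.
  set (K := beta 1%nat * Rpower 2 (- sigma 1%nat) * Rpower (C + 1) (- s)).
  assert (HK : 0 < K) by (unfold K; repeat apply Rmult_lt_0_compat; auto; apply Rpower_pos).
  enough (2 <= p * s) by (unfold Rdiv; apply (Rmult_le_reg_r s); [lra|];
                          rewrite Rmult_assoc, Rinv_l by lra; lra).
  apply (exponent_le_of_power_bound K); [exact HK|]. intros eps Heps.
  destruct (Hb 1%nat eps (le_n 1) Heps) as [n [Hn Herr]].
  simpl CRI in Herr. apply resid_le_of_err in Herr.
  rewrite Rmult_1_r, <- Rpower_2 in Herr by lra.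
  pose proof (resid_dim1_ge n) as HL. fold s in HL.
  replace (1 - sigma 1%nat) with (- s) in HL by (unfold s; ring).
  assert (Hn1 : INR n + 1 <= (C + 1) * Rpower eps (- p)).
  { pose proof (Rpower_opp_ge_1 eps p ltac:(lra) Hp). nra. }
  assert (Hcmp : Rpower (C + 1) (- s) * Rpower eps (p * s) <= Rpower (INR n + 1) (- s)).
  { replace (p * s) with (- p * - s) by ring.
    rewrite <- Rpower_mult, Rpower_mult_distr by (try apply Rpower_pos; lra).
    apply Rpower_opp_le_antimono; [pose proof (pos_INR n) |]; lra. }
  unfold K. pose proof (Rpower_pos 2 (- sigma 1%nat)).
  apply (Rmult_le_compat_l (beta 1%nat * Rpower 2 (- sigma 1%nat))) in Hcmp; [|nra].
  lra.
Qed.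

(* Take [eps^p] proportional to [1/d]: then [n <= d/2], and [d - n] eigenvalues
   [>= beta d] are discarded. *)
Lemma beta_decay_of_SPT_with p : 0 < p -> SPT_with alpha beta sigma ABS p ->
  exists K N, 0 < K /\ forall d, (N <= d)%nat -> beta d * Rpower (INR d) (1 + 2 / p) <= K.
Proof.
  intros Hp [C [HC Hb]].
  set (C' := C + 1). assert (HC' : 0 < C') by (unfold C'; lra).
  destruct (exists_nat_ge (2 * C' + 1)) as [N HN].
  exists (2 * Rpower (2 * C') (2 / p)), (max 1 N).
  split; [pose proof (Rpower_pos (2 * C') (2 / p)); lra|].
  intros d Hd. pose proof (le_INR N d ltac:(lia)) as HNd.
  assert (HdR : 0 < INR d) by lra.
  set (b0 := 2 * C' / INR d).
  assert (Hb0 : 0 < b0 < 1).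
  { unfold b0; split; [apply Rdiv_lt_0_compat; lra|].
    apply (Rmult_lt_reg_r (INR d)); auto. unfold Rdiv; rewrite Rmult_assoc, Rinv_l by lra. lra. }
  set (eps := Rpower b0 (/ p)).
  assert (Hip : 0 < / p) by (apply Rinv_0_lt_compat; auto).
  assert (Heps : 0 < eps < 1).
  { split; [apply Rpower_pos|]. unfold eps. rewrite <- (Rpower_1_l (/ p)). apply Rlt_Rpower_l; lra. }
  destruct (Hb d eps ltac:(lia) Heps) as [n [Hn Herr]].
  simpl CRI in Herr. apply resid_le_of_err in Herr.
  pose proof (resid_ge_beta_d d n ltac:(lia)) as HL.
  assert (Hepm : Rpower eps (- p) = INR d / (2 * C')).
  { unfold eps. rewrite Rpower_mult. replace (/ p * - p) with (Ropp 1) by (field; lra).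
    rewrite Rpower_Ropp, Rpower_1 by lra. unfold b0. field; lra. }
  rewrite Hepm in Hn.
  assert (Hn2 : INR n <= INR d / 2).
  { replace (C * (INR d / (2 * C'))) with (INR d / 2 * (C / C')) in Hn by (field; lra).
    assert (C / C' <= 1) by (apply (Rmult_le_reg_r C'); [lra|]; unfold Rdiv;
                             rewrite Rmult_assoc, Rinv_l by lra; unfold C'; lra).
    nra. }
  assert (Hep2 : (eps * 1) ^ 2 = Rpower (2 * C') (2 / p) * Rpower (INR d) (- (2 / p))).
  { rewrite Rmult_1_r, <- Rpower_2 by lra. unfold eps, b0.
    rewrite Rpower_mult, Rpower_div_base by lra. f_equal; f_equal; field; lra. }
  rewrite Hep2 in Herr.
  pose proof (beta_pos d ltac:(lia)).
  assert (Hd2 : INR d * beta d <= 2 * (Rpower (2 * C') (2 / p) * Rpower (INR d) (- (2 / p)))) by nra.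
  rewrite Rpower_plus, Rpower_1 by lra.
  apply (Rmult_le_compat_r (Rpower (INR d) (2 / p))) in Hd2; [|apply Rlt_le, Rpower_pos].
  rewrite !Rmult_assoc, <- Rpower_plus, Rplus_opp_l, Rpower_O, Rmult_1_r in Hd2 by lra.
  lra.
Qed.

Lemma A_star_ge_of_SPT_with p : 0 < p -> SPT_with alpha beta sigma ABS p ->
  Rbar_le (1 + 2 / p) (A_star beta).
Proof.
  intros Hp HSp. destruct (beta_decay_of_SPT_with p Hp HSp) as [K [N [HK Hdecay]]].
  apply (LimInf_log_ratio_ge beta _ K (max 1 N)); [exact HK | |].
  - intros d Hd; apply beta_pos; lia.
  - intros d Hd; apply Hdecay; lia.
Qed.

(* With [tau = p / (p + 2)], [beta j <= j^(- a')] for [a' > 1 + 2 / p] makes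
   [beta j ^ tau] summable. *)
Lemma SPT_with_of_A_star_gt p : 0 < p -> 2 / (sigma 1%nat - 1) <= p ->
  Rbar_lt (1 + 2 / p) (A_star beta) -> SPT_with alpha beta sigma ABS p.
Proof.
  intros Hp Hsp HA.
  destruct (LimInf_gt_eventually _ _ HA) as [a' [N [Ha' HN]]].
  set (tau := p / (p + 2)). assert (Htau : 0 < tau) by (apply Rdiv_lt_0_compat; lra).
  set (s := tau * a').
  assert (Hs : 1 < s).
  { unfold s, tau. replace (p / (p + 2) * a') with (p * a' / (p + 2)) by (field; lra).
    apply (Rmult_lt_reg_r (p + 2)); [lra|]. unfold Rdiv; rewrite Rmult_assoc, Rinv_l by lra.
    assert (p * (1 + 2 / p) = p + 2) by (field; lra). nra. }
  apply (SPT_with_of_sum_beta_pow_le p (Rpower (INR (max N 2)) s * (s / (s - 1)))); auto.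
  - apply Rmult_lt_0_compat; [apply Rpower_pos | apply Rdiv_lt_0_compat; lra].
  - apply sumR_pow_le_of_decay; [apply Rlt_le, Htau | exact Hs | lia | |].
    + intros j Hj. split; [apply beta_pos | apply beta_le_1]; lia.
    + intros j Hj. apply Rpower_le_of_log_ratio; [apply beta_pos | | | apply HN]; lia || lra.
Qed.

Lemma SPT_with_necessary p : 0 <= p -> SPT_with alpha beta sigma ABS p ->
  2 / (sigma 1%nat - 1) <= p /\ Rbar_le (1 + 2 / p) (A_star beta).
Proof.
  intros Hp HSp. pose proof (SPT_with_exponent_ge_sigma p Hp HSp) as Hsp. split; [exact Hsp|].
  apply A_star_ge_of_SPT_with; [|exact HSp].
  assert (0 < 2 / (sigma 1%nat - 1)) by (apply Rdiv_lt_0_compat; lra). lra.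
Qed.

Lemma SPT_with_of_exponent_gt p : Rbar_lt 1 (A_star beta) ->
  Rmax (two_over (A_star beta)) (2 / (sigma 1%nat - 1)) < p -> SPT_with alpha beta sigma ABS p.
Proof.
  intros HA Hp.
  pose proof (Rle_lt_trans _ _ _ (Rmax_l _ _) Hp) as HpA.
  pose proof (Rle_lt_trans _ _ _ (Rmax_r _ _) Hp) as Hps.
  assert (0 < 2 / (sigma 1%nat - 1)) by (apply Rdiv_lt_0_compat; lra).
  apply SPT_with_of_A_star_gt; [lra | lra |]. apply Rbar_lt_of_two_over_lt; assumption.
Qed.

End AdditiveKorobov.

Theorem theorem2p1 (alpha beta sigma : nat -> R)
  (Halpha : forall j, (1 <= j)%nat -> 0 <= alpha j)
  (Hbeta1 : beta 1%nat <= 1)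
  (Hbeta_mono : forall j, (1 <= j)%nat -> beta (S j) <= beta j)
  (Hbeta_pos : forall j, (1 <= j)%nat -> 0 < beta j)
  (Hsigma1 : 1 < sigma 1%nat)
  (Hsigma_mono : forall j, (1 <= j)%nat -> sigma j <= sigma (S j)) :
  (PT alpha beta sigma ABS /\ PT alpha beta sigma NOR) /\
  (SPT alpha beta sigma ABS <-> Rbar_lt 1 (A_star beta)) /\
  (Rbar_lt 1 (A_star beta) ->
     is_SPT_exponent alpha beta sigma ABS
       (Rmax (two_over (A_star beta)) (2 / (sigma 1%nat - 1)))).
Proof.
  assert (Hsig : 0 < 2 / (sigma 1%nat - 1)) by (apply Rdiv_lt_0_compat; lra).
  assert (Hpstar : 0 < Rmax (two_over (A_star beta)) (2 / (sigma 1%nat - 1)))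
    by (eapply Rlt_le_trans; [exact Hsig | apply Rmax_r]).
  set (pstar := Rmax (two_over (A_star beta)) (2 / (sigma 1%nat - 1))) in *.
  split; [split|split; [split|]].
  - eapply PT_ABS; eassumption.
  - eapply PT_NOR; eassumption.
  - intros (p & Hp & HSp).
    edestruct (SPT_with_necessary alpha beta sigma) with (p := p) as [Hsp HA]; try eassumption.
    assert (0 < 2 / p) by (apply Rdiv_lt_0_compat; lra).
    eapply Rbar_lt_le_trans; [|exact HA]. simpl; lra.
  - intros HA. exists (pstar + 1). split; [lra|].
    eapply SPT_with_of_exponent_gt; try eassumption. fold pstar; lra.
  - intros HA. split.
    + intros p Hp HSp.
      edestruct (SPT_with_necessary alpha beta sigma) with (p := p) as [Hsp HAp]; try eassumption.
      apply Rmax_lub; [apply two_over_le_of_Rbar_le|]; auto; lra.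
    + intros x Hx. exists ((pstar + x) / 2). split; [lra|]. split; [|lra].
      eapply SPT_with_of_exponent_gt; try eassumption. fold pstar; lra.
Qed.
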